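(* Let $R$ be a commutative ring in which $2$ is invertible, let $M$ be a quadratic $R$-space, and let $\alpha\in\mathrm{TransO}(M,\langle\,,\,\rangle)$. Then there exists $\beta(X)\in\mathrm{TransO}(M[X],\langle\,,\,\rangle)$ such that $\beta(1)=\alpha$ and $\beta(0)=\mathrm{Id}$.
   Context: A quadratic space is a finitely generated projective module $M$ with quadratic form $q$ whose bilinear form $\langle x,y\rangle=q(x+y)-q(x)-q(y)$ is non-degenerate. $M[X]=M\otimes_RR[X]$ is the quadratic space over $R[X]$ obtained by extension of scalars, and $\beta(c)$ for $c\in R$ denotes the specialization $X\mapsto c$. ESD transvections on a quadratic space $N$ (over any such ring): for $u,v\in N$ with $u$ unimodular, $q(u)=0$, $\langle u,v\rangle=0$, $r=q(v)$, $\sigma_{u,v}(x)=x+\langle v,x\rangle u-\langle u,x\rangle v-r\langle u,x\rangle u$; $\mathrm{TransO}(N,\langle\,,\,\rangle)$ is the group generated by all of them. *)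

From HB Require Import structures.
From mathcomp Require Import all_boot all_order all_algebra.
Set Implicit Arguments. Unset Strict Implicit. Unset Printing Implicit Defensive.
Import GRing.Theory.
Local Open Scope ring_scope.

(* A finitely generated projective R-module M is represented (up to
   isomorphism) as the image of an idempotent matrix P : 'M_n acting on row
   vectors: M = { x : 'rV_n | x *m P = x }.  A quadratic form q on M is
   represented by a matrix A with q x = x A x^T (every quadratic form on M is
   of this shape: extend it to R^n through the projection x |-> x *m P). *)

Section QuadSpace.
Variables (R : comRingType) (n : nat) (P A : 'M[R]_n).

Definition inM (x : 'rV[R]_n) : bool := x *m P == x.

Definition qf (x : 'rV[R]_n) : R := (x *m A *m x^T) 0 0.

(* polar bilinear form <x,y> = q(x+y) - q(x) - q(y) *)
Definition bil (x y : 'rV[R]_n) : R := (x *m (A + A^T) *m y^T) 0 0.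

(* linear functionals on M are exactly the y |-> (y *m c) 0 0, c : 'cV_n *)
Definition quad_space : Prop :=
  [/\ P *m P = P,
      (forall x, inM x -> (forall y, inM y -> bil x y = 0) -> x = 0) &
      (forall c : 'cV[R]_n, exists x, inM x /\
          forall y, inM y -> bil x y = (y *m c) 0 0)].

Definition unimodular (u : 'rV[R]_n) : Prop :=
  exists c : 'cV[R]_n, (u *m c) 0 0 = 1.

Definition admissible (u v : 'rV[R]_n) : Prop :=
  [/\ inM u, inM v, unimodular u, qf u = 0 & bil u v = 0].

Definition esd (u v : 'rV[R]_n) (x : 'rV[R]_n) : 'rV[R]_n :=
  x + bil v x *: u - bil u x *: v - (qf v * bil u x) *: u.

(* TransO(M) : subgroup (of the maps M -> M, compared on M) generated by the
   ESD transvections. *)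
Inductive TransO : ('rV[R]_n -> 'rV[R]_n) -> Prop :=
| TransO_gen u v : admissible u v -> TransO (esd u v)
| TransO_id : TransO id
| TransO_comp g h : TransO g -> TransO h -> TransO (g \o h)
| TransO_inv g h : TransO g -> (forall x, inM x -> inM (h x)) ->
    (forall x, inM x -> h (g x) = x) -> (forall x, inM x -> g (h x) = x) ->
    TransO h
| TransO_ext g h : TransO g -> (forall x, inM x -> g x = h x) -> TransO h.

End QuadSpace.

Definition polyX_mx (R : comRingType) (m k : nat) (B : 'M[R]_(m, k))
  : 'M[{poly R}]_(m, k) := map_mx polyC B.

Definition specialize (R : comRingType) (n : nat)
  (beta : 'rV[{poly R}]_n -> 'rV[{poly R}]_n) (c : R) (x : 'rV[R]_n)
  : 'rV[R]_n := map_mx (fun p => p.[c]) (beta (polyX_mx x)).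

From mathcomp Require Import all_boot all_order all_algebra.
From mathcomp Require Import ring.
Import GRing.Theory.
Local Open Scope ring_scope.

(** Over [R[X]] the pair [(u, X v)] is still admissible, so the transvection
  [sigma_{u, X v}] of [M[X]] specializes to [sigma_{u, v}] at [X = 1] and to
  [sigma_{u, 0} = Id] at [X = 0].  Transvections act by matrices, for which
  specialization commutes with products, so paths for composites and inverses
  are composites and inverses of paths. *)

Section PolarForm.
Variables (R : comRingType) (n : nat) (A : 'M[R]_n).
Implicit Types (x y z u v w : 'rV[R]_n).

Lemma trmx_polar : (A + A^T)^T = A + A^T.
Proof. by rewrite linearD /= trmxK addrC. Qed.

Lemma bilC x y : bil A x y = bil A y x.
Proof.
have tr11 (a : 'M[R]_1) : a^T 0 0 = a 0 0 by rewrite mxE.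
by rewrite /bil -tr11 !trmx_mul trmxK trmx_polar mulmxA.
Qed.

Lemma bilDr x y z : bil A x (y + z) = bil A x y + bil A x z.
Proof. by rewrite /bil [(y + z)^T]linearD mulmxDr mxE. Qed.

Lemma bilZr x c y : bil A x (c *: y) = c * bil A x y.
Proof. by rewrite /bil [(c *: y)^T]linearZ -scalemxAr mxE. Qed.

Lemma bilNr x y : bil A x (- y) = - bil A x y.
Proof. by rewrite /bil [(- y)^T]linearN mulmxN mxE. Qed.

Lemma bilBr x y z : bil A x (y - z) = bil A x y - bil A x z.
Proof. by rewrite bilDr bilNr. Qed.

Lemma bilNl x y : bil A (- x) y = - bil A x y.
Proof. by rewrite bilC bilNr bilC. Qed.

Lemma bil0l y : bil A 0 y = 0.
Proof. by rewrite /bil !mul0mx mxE. Qed.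

Lemma bilxx x : bil A x x = qf A x + qf A x.
Proof.
have tr11 (a : 'M[R]_1) : a^T 0 0 = a 0 0 by rewrite mxE.
rewrite /bil /qf mulmxDr mulmxDl mxE -[in X in _ + X]tr11.
by rewrite !trmx_mul !trmxK mulmxA.
Qed.

Lemma qfN x : qf A (- x) = qf A x.
Proof. by rewrite /qf [(- x)^T]linearN mulNmx mulmxN mulNmx opprK. Qed.

Lemma qf0 : qf A 0 = 0.
Proof. by rewrite /qf !mul0mx mxE. Qed.

Lemma esdK u w : qf A u = 0 -> bil A u w = 0 ->
  cancel (esd A u w) (esd A u (- w)).
Proof.
move=> qu0 buw0 y.
have buu0 : bil A u u = 0 by rewrite bilxx qu0 addr0.
have bwu0 : bil A w u = 0 by rewrite bilC.
have bu_esd : bil A u (esd A u w y) = bil A u y.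
  by rewrite /esd !bilBr bilDr !bilZr buu0 buw0; ring.
have bNw_esd : bil A (- w) (esd A u w y) =
    - bil A w y + (qf A w + qf A w) * bil A u y.
  by rewrite bilNl /esd !bilBr bilDr !bilZr bwu0 bilxx; ring.
rewrite [esd A u (- w) _]/esd bu_esd bNw_esd qfN /esd.
by apply/rowP => j; rewrite !mxE; ring.
Qed.

Definition esd_mx u v : 'M[R]_n :=
  1%:M + (A + A^T) *m v^T *m u - (A + A^T) *m u^T *m v
    - qf A v *: ((A + A^T) *m u^T *m u).

Lemma mul_esd_mx x u v : x *m esd_mx u v = esd A u v x.
Proof.
have mul11 (a : 'M[R]_1) y : a *m y = a 0 0 *: y.
  by rewrite {1}[a]mx11_scalar mul_scalar_mx.
have bilE z : (x *m (A + A^T) *m z^T) 0 0 = bil A z x.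
  by rewrite bilC.
rewrite /esd_mx !mulmxDr !mulmxN mulmx1 -scalemxAr !mulmxA !mul11.
by rewrite !bilE scalerA.
Qed.

Lemma esd_mx0 u : esd_mx u 0 = 1%:M.
Proof.
by rewrite /esd_mx qf0 scale0r linear0 mulmx0 !mul0mx mulmx0 !subr0 addr0.
Qed.

End PolarForm.

Arguments esd_mx {R n} A u v.

Section TransvectionsPreserveM.
Variables (R : comRingType) (n : nat) (P A : 'M[R]_n).

Lemma esd_inM u v x : inM P u -> inM P v -> inM P x -> inM P (esd A u v x).
Proof.
rewrite /inM /esd => /eqP Pu /eqP Pv /eqP Px.
by rewrite !mulmxBl !mulmxDl -!scalemxAl Pu Pv Px.
Qed.

Lemma TransO_inM g : TransO P A g -> forall x, inM P x -> inM P (g x).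
Proof.
elim=> //.
- by move=> u v [Pu Pv _ _ _] x Px; apply: esd_inM.
- by move=> g1 h1 _ IH1 _ IH2 x Px /=; apply/IH1/IH2.
- by move=> g1 h1 _ IH g1h1 x Px; rewrite -g1h1 //; apply: IH.
Qed.

End TransvectionsPreserveM.

Arguments TransO_inM {R n P A g}.

Section MapForm.
Variables (R S : comRingType) (f : {rmorphism R -> S}) (n : nat).
Variable A : 'M[R]_n.

Lemma qf_map_mx v : qf (map_mx f A) (map_mx f v) = f (qf A v).
Proof. by rewrite /qf map_trmx -!map_mxM mxE. Qed.

Lemma bil_map_mx u v :
  bil (map_mx f A) (map_mx f u) (map_mx f v) = f (bil A u v).
Proof. by rewrite /bil !map_trmx -map_mxD -!map_mxM mxE. Qed.

Lemma map_esd_mx u v :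
  map_mx f (esd_mx A u v) = esd_mx (map_mx f A) (map_mx f u) (map_mx f v).
Proof.
rewrite /esd_mx qf_map_mx !map_trmx.
by rewrite !(map_mxB, map_mxD, map_mxZ, map_mxM, map_mx1).
Qed.

End MapForm.

Section Homotopy.
Variables (R : comRingType) (n : nat) (P A : 'M[R]_n).
Local Notation PX := (polyX_mx P).
Local Notation AX := (polyX_mx A).
Local Notation ev c := (map_mx (horner_eval c)).

Lemma horner_polyX_mx c m k (B : 'M[R]_(m, k)) : ev c (polyX_mx B) = B.
Proof. by apply/matrixP => i j; rewrite !mxE /horner_eval hornerC. Qed.

Lemma specialize_mulmx c (B : 'M[{poly R}]_n) x :
  specialize (mulmx^~ B) c x = x *m ev c B.
Proof.
by rewrite /specialize -[fun p => _]/(horner_eval c) map_mxM horner_polyX_mx.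
Qed.

Lemma polyX_mx_inM {x} : inM P x -> inM PX (polyX_mx x).
Proof. by rewrite /inM /polyX_mx -map_mxM => /eqP ->. Qed.

Lemma horner_scaleX_polyX_mx c m k (B : 'M[R]_(m, k)) :
  ev c ('X *: polyX_mx B) = c *: B.
Proof.
by apply/matrixP => i j; rewrite !mxE /horner_eval mulrC hornerMX hornerC mulrC.
Qed.

Lemma horner_esd_mx_scaleX c u v :
  ev c (esd_mx AX (polyX_mx u) ('X *: polyX_mx v)) = esd_mx A u (c *: v).
Proof. by rewrite map_esd_mx horner_scaleX_polyX_mx !horner_polyX_mx. Qed.

Lemma horner_mx_cancel c {B B' : 'M[{poly R}]_n} :
  {in inM PX, cancel (mulmx^~ B) (mulmx^~ B')} ->
  {in inM P, cancel (mulmx^~ (ev c B)) (mulmx^~ (ev c B'))}.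
Proof.
move=> BK x Px /=.
by rewrite -mulmxA -map_mxM -[x in LHS](horner_polyX_mx c) -map_mxM mulmxA
  BK ?horner_polyX_mx //; apply: polyX_mx_inM.
Qed.

(* [B'] is carried along because [TransO_inv] needs an explicit inverse. *)
Record homotopy (alpha : 'rV[R]_n -> 'rV[R]_n) (B B' : 'M[{poly R}]_n) : Prop :=
  Homotopy {
    homotopy_TransO : TransO PX AX (mulmx^~ B);
    homotopy_TransO_inv : TransO PX AX (mulmx^~ B');
    homotopy_K : {in inM PX, cancel (mulmx^~ B) (mulmx^~ B')};
    homotopy_KV : {in inM PX, cancel (mulmx^~ B') (mulmx^~ B)};
    homotopy_at1 : {in inM P, forall x, x *m ev 1 B = alpha x};
    homotopy_at0 : {in inM P, forall x, x *m ev 0 B = x} }.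

Lemma homotopy_esd u v : admissible P A u v ->
  exists B B', homotopy (esd A u v) B B'.
Proof.
move=> [Pu Pv [c uc1] qu0 buv0].
set uX := polyX_mx u; set wX := 'X *: polyX_mx v.
have PuX : inM PX uX by apply: polyX_mx_inM.
have PwX : inM PX wX by rewrite /inM -scalemxAl (eqP (polyX_mx_inM Pv)).
have qfuX0 : qf AX uX = 0 by rewrite qf_map_mx qu0 rmorph0.
have buwX0 : bil AX uX wX = 0 by rewrite bilZr bil_map_mx buv0 rmorph0 mulr0.
have uX_unimodular : unimodular uX.
  by exists (polyX_mx c); rewrite -map_mxM mxE uc1 rmorph1.
have TransO_esd_mx w :
    admissible PX AX uX w -> TransO PX AX (mulmx^~ (esd_mx AX uX w)).
  move=> adm; apply: (TransO_ext (TransO_gen adm)) => x _.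
  by rewrite mul_esd_mx.
exists (esd_mx AX uX wX), (esd_mx AX uX (- wX)); split.
- exact: TransO_esd_mx.
- apply: TransO_esd_mx; split=> //; last by rewrite bilNr buwX0 oppr0.
  by rewrite /inM mulNmx (eqP PwX).
- by move=> y _; rewrite /= !mul_esd_mx esdK.
- move=> y _; rewrite /= !mul_esd_mx -{1}[wX]opprK esdK //.
  by rewrite bilNr buwX0 oppr0.
- by move=> x _; rewrite horner_esd_mx_scaleX scale1r mul_esd_mx.
- by move=> x _; rewrite horner_esd_mx_scaleX scale0r esd_mx0 mulmx1.
Qed.

Lemma homotopy_id : homotopy id 1%:M 1%:M.
Proof.
have TransO_1 : TransO PX AX (mulmx^~ 1%:M).
  by apply: (TransO_ext (TransO_id _ _)) => x _; rewrite mulmx1.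
by split=> // [y _|y _|x _|x _]; rewrite ?map_mx1 !mulmx1.
Qed.

Lemma homotopy_comp g h Bg Bg' Bh Bh' :
  homotopy g Bg Bg' -> homotopy h Bh Bh' -> {in inM P, forall x, inM P (h x)} ->
  homotopy (g \o h) (Bh *m Bg) (Bg' *m Bh').
Proof.
move=> [Tg Tg' BgK BgKV Bg1 Bg0] [Th Th' BhK BhKV Bh1 Bh0] hM.
split.
- by apply: (TransO_ext (TransO_comp Tg Th)) => y _ /=; rewrite mulmxA.
- by apply: (TransO_ext (TransO_comp Th' Tg')) => y _ /=; rewrite mulmxA.
- by move=> y Py /=; rewrite !mulmxA BgK ?BhK //; exact: TransO_inM Th _ Py.
- by move=> y Py /=; rewrite !mulmxA BhKV ?BgKV //; exact: TransO_inM Tg' _ Py.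
- by move=> x Px; rewrite map_mxM mulmxA Bh1 // Bg1 //; exact: hM.
- by move=> x Px; rewrite map_mxM mulmxA Bh0 // Bg0.
Qed.

Lemma homotopy_inv g h B B' : homotopy g B B' ->
  {in inM P, forall x, inM P (h x)} -> {in inM P, cancel g h} ->
  {in inM P, cancel h g} -> homotopy h B' B.
Proof.
move=> [TB TB' BK BKV B1 B0] hM gK hK.
split=> // x Px.
- have Phx : inM P (h x) by exact: hM.
  by rewrite -{1}(hK x Px) -B1 // (horner_mx_cancel 1 BK).
- by rewrite -{1}(B0 x Px) (horner_mx_cancel 0 BK).
Qed.

Lemma homotopy_ext g h B B' : homotopy g B B' -> {in inM P, g =1 h} ->
  homotopy h B B'.
Proof.
by move=> [TB TB' BK BKV B1 B0] gh; split=> // x Px; rewrite -gh ?B1.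
Qed.

Lemma TransO_homotopy alpha :
  TransO P A alpha -> exists B B', homotopy alpha B B'.
Proof.
elim=> [u v /homotopy_esd //||g h _ [Bg [Bg' hg]] Th [Bh [Bh' hh]]
  |g h _ [B [B' hg]] hM gK hK|g h _ [B [B' hg]] gh].
- by exists 1%:M, 1%:M; apply: homotopy_id.
- by exists (Bh *m Bg), (Bg' *m Bh'); apply: homotopy_comp (TransO_inM Th).
- by exists B', B; apply: homotopy_inv hg hM gK hK.
- by exists B, B'; apply: homotopy_ext hg gh.
Qed.

End Homotopy.

Theorem mainTheorem16 (R : comUnitRingType) (n : nat) (P A : 'M[R]_n)
  (alpha : 'rV[R]_n -> 'rV[R]_n) :
  (2%:R : R) \is a GRing.unit ->
  quad_space P A ->
  TransO P A alpha ->
  exists beta : 'rV[{poly R}]_n -> 'rV[{poly R}]_n,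
    [/\ TransO (polyX_mx P) (polyX_mx A) beta,
        (forall x, inM P x -> specialize beta 1 x = alpha x) &
        (forall x, inM P x -> specialize beta 0 x = x)].
Proof.
move=> _ _ /TransO_homotopy [B [B' [TB _ _ _ B1 B0]]].
exists (mulmx^~ B); split=> // x Px; rewrite specialize_mulmx.
- exact: B1.
- exact: B0.
Qed.
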